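(* Every ultra-metric space is isometric to a closed subset of an ultra-normed Boolean group (equipped with the metric $(u,v)\mapsto\|u-v\|$).
   Context: An ultra-metric satisfies $d(x,z)\le\max\{d(x,y),d(y,z)\}$. A Boolean group is a group in which every non-identity element has order 2. An ultra-norm on an abelian group is a function $\|\cdot\|\ge0$ with $\|0\|=0$, $\|-u\|=\|u\|$, $\|u+v\|\le\max\{\|u\|,\|v\|\}$ and $\|u\|=0$ only for $u=0$. *)

From HB Require Import structures.
From mathcomp Require Import all_boot all_order all_algebra.
From mathcomp Require Import reals.
Set Implicit Arguments. Unset Strict Implicit. Unset Printing Implicit Defensive.
Import Order.TTheory GRing.Theory Num.Theory.
Local Open Scope ring_scope.

Definition is_ultrametric (R : realType) (X : Type) (d : X -> X -> R) : Prop :=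
  [/\ forall x y, 0 <= d x y,
      forall x y, d x y = 0 <-> x = y,
      forall x y, d x y = d y x &
      forall x y z, d x z <= Num.max (d x y) (d y z)].

Definition is_boolean_group (G : zmodType) : Prop :=
  forall u : G, u != 0 -> u + u = 0.

Definition is_ultranorm (R : realType) (G : zmodType) (N : G -> R) : Prop :=
  [/\ forall u, 0 <= N u,
      N 0 = 0,
      forall u, N (- u) = N u,
      forall u v, N (u + v) <= Num.max (N u) (N v) &
      forall u, N u = 0 -> u = 0].

Definition norm_closed (R : realType) (G : zmodType) (N : G -> R) (S : G -> Prop) : Prop :=
  forall g : G, (forall eps : R, 0 < eps -> exists2 s, S s & N (s - g) < eps) -> S g.

From HB Require Import structures.
From mathcomp Require Import all_boot all_order all_algebra.
From mathcomp Require Import finmap boolp classical_sets reals.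
Import Order.TTheory GRing.Theory Num.Theory.
Set Implicit Arguments. Unset Strict Implicit. Unset Printing Implicit Defensive.
Local Open Scope fset_scope.
Local Open Scope ring_scope.

(* Adjoin to X a point None at distance max(1, d(x, a)) from every x, and send
   x to {x, None} in the Boolean group of even finite subsets of option X under
   symmetric difference.  The norm of u is the infimum of the s such that every
   open ball of radius > s meets u in an even number of points.  Ball parities
   add under symmetric difference, which gives the ultrametric inequality, and
   {x, y} has norm d(x, y) because a ball isolates x from y exactly when its
   radius is at most d(x, y).  If g is closer to {x, None} than both 1 and the
   least distance between points of g, every small ball centred at a point of g
   meets g + {x, None} evenly, which forces g = {p, None} with p close to x. *)

Section SymmetricDifference.
Variable Y : choiceType.
Implicit Types (A B : {fset Y}) (z : Y).

Definition fsymdiff A B := (A `\` B) `|` (B `\` A).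

Lemma in_fsymdiff A B z : (z \in fsymdiff A B) = (z \in A) (+) (z \in B).
Proof. by rewrite !inE; case: (z \in A); case: (z \in B). Qed.

Lemma odd_fsymdiff A B : odd #|` fsymdiff A B| = odd #|` A| (+) odd #|` B|.
Proof.
have disj : (A `\` B) `&` (B `\` A) = fset0.
  by apply/fsetP => z; rewrite !inE; case: (z \in A); case: (z \in B).
have := cardfsUI (A `\` B) (B `\` A); rewrite disj cardfs0 addn0 -/(fsymdiff A B).
have := cardfsID B A; have := cardfsID A B; rewrite fsetIC.
by move=> cardB cardA ->; rewrite -cardA -cardB !oddD addbACA addbb addFb.
Qed.

Lemma fsymdiff_sep A B (P : pred Y) :
  [fset z in fsymdiff A B | P z] = fsymdiff [fset z in A | P z] [fset z in B | P z].
Proof.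
by apply/fsetP => z; rewrite !inE; case: (z \in A); case: (z \in B); case: (P z).
Qed.
End SymmetricDifference.

Section EvenSubsets.
Variable Y : choiceType.

Record evenfset := EvenFset { efset : {fset Y}; _ : ~~ odd #|` efset| }.
HB.instance Definition _ := [isSub for efset].
HB.instance Definition _ := [Choice of evenfset by <:].

Implicit Types (u v : evenfset) (z : Y).

Lemma evenfsetP u : ~~ odd #|` efset u|.
Proof. by case: u. Qed.

Lemma evenfset_ext u v : efset u =i efset v -> u = v.
Proof. by move=> /fsetP; apply: val_inj. Qed.

Lemma even_fset0 : ~~ odd #|` @fset0 Y|.
Proof. by rewrite cardfs0. Qed.

Lemma even_fsymdiff u v : ~~ odd #|` fsymdiff (efset u) (efset v)|.
Proof. by rewrite odd_fsymdiff (negPf (evenfsetP u)) (negPf (evenfsetP v)). Qed.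

Definition evenfset0 := EvenFset even_fset0.
Definition evenfset_add u v := EvenFset (even_fsymdiff u v).

Lemma in_evenfset_add u v z :
  (z \in efset (evenfset_add u v)) = (z \in efset u) (+) (z \in efset v).
Proof. exact: in_fsymdiff. Qed.

Lemma evenfset_addA : associative evenfset_add.
Proof. by move=> u v w; apply: evenfset_ext => z; rewrite !in_evenfset_add addbA. Qed.

Lemma evenfset_addC : commutative evenfset_add.
Proof. by move=> u v; apply: evenfset_ext => z; rewrite !in_evenfset_add addbC. Qed.

Lemma evenfset_add0 : left_id evenfset0 evenfset_add.
Proof. by move=> u; apply: evenfset_ext => z; rewrite in_evenfset_add inE. Qed.

Lemma evenfset_addK : left_inverse evenfset0 id evenfset_add.
Proof. by move=> u; apply: evenfset_ext => z; rewrite in_evenfset_add addbb inE. Qed.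

HB.instance Definition _ :=
  GRing.isZmodule.Build evenfset evenfset_addA evenfset_addC evenfset_add0 evenfset_addK.

Lemma in_evenfsetD u v z : (z \in efset (u + v)) = (z \in efset u) (+) (z \in efset v).
Proof. exact: in_fsymdiff. Qed.

Lemma evenfsetN u : - u = u.
Proof. by []. Qed.

Lemma evenfset_boolean : is_boolean_group evenfset.
Proof. by move=> u _; apply: evenfset_ext => z; rewrite in_evenfsetD addbb inE. Qed.
End EvenSubsets.

Section FiniteBounds.
Variables (R : realType) (T : eqType).

Lemma seq_ub (s : seq T) (F : T -> R) :
  exists2 M, 0 <= M & forall t, t \in s -> F t <= M.
Proof.
elim: s => [|t s [M M_ge0 FM]]; first by exists 0.
exists (Num.max (F t) M); first by rewrite le_max M_ge0 orbT.
by move=> t'; rewrite inE => /predU1P[->|/FM]; rewrite le_max ?lexx // => ->; rewrite orbT.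
Qed.

Lemma seq_lb_gt0 (s : seq T) (F : T -> R) :
  (forall t, t \in s -> 0 < F t) -> exists2 m, 0 < m & forall t, t \in s -> m <= F t.
Proof.
elim: s => [_|t s IH F_gt0]; first by exists 1.
have [t' t's|m m_gt0 mF] := IH; first by rewrite F_gt0 // inE t's orbT.
exists (Num.min (F t) m); first by rewrite lt_min m_gt0 F_gt0 ?mem_head.
by move=> t'; rewrite inE => /predU1P[->|/mF]; rewrite ge_min ?lexx // => ->; rewrite orbT.
Qed.
End FiniteBounds.

Section Ultrametric.
Variables (R : realType) (T : eqType) (e : T -> T -> R).
Hypothesis e_ultra : is_ultrametric e.
Implicit Types p q z : T.

Lemma ultra_sym p q : e p q = e q p. Proof. by case: e_ultra. Qed.
Lemma ultra_refl p : e p p = 0. Proof. by case: e_ultra => _ /(_ p p) [_ ->]. Qed.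
Lemma ultra_max p q z : e p z <= Num.max (e p q) (e q z). Proof. by case: e_ultra. Qed.

Lemma ultra_gt0 p q : p != q -> 0 < e p q.
Proof.
case: e_ultra => e_ge0 e_eq0 _ _ pq; rewrite lt_def e_ge0 andbT.
by apply: contra pq => /eqP/e_eq0->.
Qed.

Lemma ultra_lt_trans p q z r : e p q < r -> e q z < r -> e p z < r.
Proof. by move=> pq qz; apply: le_lt_trans (ultra_max p q z) _; rewrite gt_max pq qz. Qed.
End Ultrametric.

Section ParityNorm.
Variables (R : realType) (Y : choiceType) (e : Y -> Y -> R).
Hypothesis e_ultra : is_ultrametric e.
Implicit Types (A B : {fset Y}) (u v : evenfset Y) (p q z : Y) (r s : R).

Lemma fset_diam A : exists2 M, 0 <= M & forall p q, p \in A -> q \in A -> e p q <= M.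
Proof.
have [M M_ge0 eM] := seq_ub (A `*` A) (fun pq => e pq.1 pq.2).
by exists M => // p q pA qA; apply: (eM (p, q)); rewrite in_fsetM pA qA.
Qed.

Lemma fset_separation A :
  exists2 m, 0 < m & forall p q, p \in A -> q \in A -> p != q -> m <= e p q.
Proof.
pose F pq := if pq.1 == pq.2 then 1 else e pq.1 pq.2.
have [[p q] _|m m_gt0 mF] := @seq_lb_gt0 _ _ (A `*` A) F.
  by rewrite /F /=; case: eqVneq => [_|/(ultra_gt0 e_ultra)//]; apply: ltr01.
exists m => // p q pA qA pq.
by have := mF (p, q); rewrite in_fsetM pA qA /F /= (negPf pq); apply.
Qed.

Definition balls_even A r := forall c, ~~ odd #|` [fset z in A | e c z < r]|.

Lemma balls_even_fsymdiff A B r :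
  balls_even A r -> balls_even B r -> balls_even (fsymdiff A B) r.
Proof.
move=> A_even B_even c.
by rewrite fsymdiff_sep odd_fsymdiff (negPf (A_even c)) (negPf (B_even c)).
Qed.

(* A ball of radius exceeding the diameter of A meets A in nothing or in all of A. *)
Lemma balls_even_small A r :
  ~~ odd #|` A| -> (forall p q, p \in A -> q \in A -> e p q < r) -> balls_even A r.
Proof.
move=> A_even A_small c.
have [->|/fset0Pn[p]] := eqVneq [fset z in A | e c z < r] fset0; first by rewrite cardfs0.
rewrite !inE => /andP[pA cp]; rewrite (_ : [fset z in A | e c z < r] = A) //.
apply/fsetP => z; rewrite !inE; apply: andb_idr => zA.
exact: (ultra_lt_trans e_ultra cp (A_small p z pA zA)).
Qed.

Lemma not_balls_even_isolated A c p r :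
  p \in A -> e c p < r -> (forall z, z \in A -> e c z < r -> z = p) -> ~ balls_even A r.
Proof.
move=> pA cp p_only /(_ c); rewrite (_ : [fset z in A | e c z < r] = [fset p]) ?cardfs1 //.
apply/fsetP => z; rewrite !inE; apply/andP/eqP => [[zA cz]|->]; first exact: p_only.
by rewrite pA cp.
Qed.

(* Asking for even balls at every radius above s spares us proving that this
   property is monotone in the radius. *)
Definition parity_radii A : set R :=
  [set s | 0 <= s /\ forall r, s < r -> balls_even A r]%classic.

Definition parity_norm u : R := inf (parity_radii (efset u)).

Lemma parity_radii_neq0 u : (parity_radii (efset u) !=set0)%classic.
Proof.
have [M M_ge0 eM] := fset_diam (efset u).
exists M; split=> // r Mr; apply: balls_even_small; first exact: evenfsetP.
by move=> p q pu qu; apply: le_lt_trans (eM p q pu qu) Mr.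
Qed.

Lemma parity_norm_ge0 u : 0 <= parity_norm u.
Proof. by apply: lb_le_inf; [exact: parity_radii_neq0 | move=> s []]. Qed.

Lemma parity_norm_lt u r : parity_norm u < r -> balls_even (efset u) r.
Proof. by case/(inf_lt (parity_radii_neq0 u)) => s [_ s_even] /s_even. Qed.

Lemma parity_norm_le u s :
  0 <= s -> (forall r, s < r -> balls_even (efset u) r) -> parity_norm u <= s.
Proof. by move=> s_ge0 s_even; apply: ge_inf; [exists 0 => ? [] | split]. Qed.

Lemma parity_norm0 : parity_norm 0 = 0.
Proof.
apply/eqP; rewrite eq_le parity_norm_ge0 andbT parity_norm_le // => r _ c.
by rewrite (_ : [fset z in _ | _] = fset0) ?cardfs0 //; apply/fsetP => z; rewrite !inE.
Qed.

Lemma parity_normD u v : parity_norm (u + v) <= Num.max (parity_norm u) (parity_norm v).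
Proof.
apply: parity_norm_le => [|r]; first by rewrite le_max parity_norm_ge0.
rewrite gt_max => /andP[/parity_norm_lt u_even /parity_norm_lt v_even].
exact: balls_even_fsymdiff.
Qed.

Lemma parity_norm_eq0 u : parity_norm u = 0 -> u = 0.
Proof.
move=> u0; apply/evenfset_ext => p; rewrite inE; apply/negbTE/negP => pu.
have [m m_gt0 m_sep] := fset_separation (efset u).
have pp : e p p < m by rewrite (ultra_refl e_ultra).
have : balls_even (efset u) m by apply: parity_norm_lt; rewrite u0.
apply: (not_balls_even_isolated pu pp) => q qu pq.
by apply/eqP; apply: contraLR pq; rewrite eq_sym -leNgt; apply: m_sep.
Qed.

Lemma parity_norm_is_ultranorm : is_ultranorm parity_norm.
Proof.
split=> //.
- exact: parity_norm_ge0.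
- exact: parity_norm0.
- exact: parity_normD.
- exact: parity_norm_eq0.
Qed.
End ParityNorm.

Section PointAtInfinity.
Variables (R : realType) (X : choiceType) (d : X -> X -> R) (a : X).
Hypothesis d_ultra : is_ultrametric d.
Implicit Types x y : X.

Let d_sym := ultra_sym d_ultra.
Let d_refl := ultra_refl d_ultra.
Let d_max := ultra_max d_ultra.

Definition dist_inf x := Num.max 1 (d x a).

Lemma dist_inf_ge1 x : 1 <= dist_inf x.
Proof. by rewrite le_max lexx. Qed.

Lemma dist_inf_le x y : dist_inf x <= Num.max (d x y) (dist_inf y).
Proof.
rewrite /dist_inf ge_max !le_max lexx !orbT /=.
by have := d_max x y a; rewrite le_max => /orP[->|->]; rewrite ?orbT.
Qed.

Lemma d_le_dist_inf x y : d x y <= Num.max (dist_inf x) (dist_inf y).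
Proof.
rewrite /dist_inf; apply: le_trans (d_max x a y) _.
by rewrite ge_max !le_max lexx (d_sym a y) lexx !orbT.
Qed.

Definition dext (p q : option X) : R :=
  match p, q with
  | Some x, Some y => d x y
  | Some x, None | None, Some x => dist_inf x
  | None, None => 0
  end.

Lemma dext_ultra : is_ultrametric dext.
Proof.
have D_gt0 x : 0 < dist_inf x by apply: lt_le_trans ltr01 (dist_inf_ge1 x).
have D_neq0 x : dist_inf x <> 0 by move=> D0; have := D_gt0 x; rewrite D0 ltxx.
case: d_ultra => d_ge0 d_eq0 _ _; split.
- by case=> [x|] [y|] //=; apply: ltW.
- case=> [x|] [y|] /=; split=> //.
  + by move/d_eq0->.
  + by case=> ->; apply/d_eq0.
  + by move/D_neq0.
  + by move/D_neq0.
- by case=> [x|] [y|] //=; apply: d_sym.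
- case=> [x|] [y|] [z|] /=.
  + exact: d_max.
  + exact: dist_inf_le.
  + exact: d_le_dist_inf.
  + by rewrite le_max lexx.
  + by have := dist_inf_le z y; rewrite maxC d_sym.
  + by rewrite maxxx ltW.
  + by rewrite le_max lexx orbT.
  + by rewrite maxxx.
Qed.

Lemma even_embed x : ~~ odd #|` [fset Some x; None]|.
Proof. by rewrite cardfs2. Qed.

Definition embed x : evenfset (option X) := EvenFset (even_embed x).

Lemma in_embed x p : (p \in efset (embed x)) = (p == Some x) || (p == None).
Proof. by rewrite !inE. Qed.

Lemma in_embedD x y p :
  (p \in efset (embed x + embed y)) = (p == Some x) (+) (p == Some y).
Proof. by rewrite in_evenfsetD !in_embed; case: p => //= q; rewrite !orbF. Qed.

Lemma embed_isometry x y : parity_norm dext (embed x - embed y) = d x y.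
Proof.
have [<-|xy] := eqVneq x y; first by rewrite subrr parity_norm0 ?d_refl //; apply: dext_ultra.
have xy_gt0 : 0 < d x y := ultra_gt0 d_ultra xy.
have supp p : p \in efset (embed x + embed y) -> p = Some x \/ p = Some y.
  by rewrite in_embedD; case: eqP => [->|_]; [left | case: eqP => [->|]; [right|]].
rewrite evenfsetN; apply/eqP; rewrite eq_le; apply/andP; split.
  apply: parity_norm_le => [|r xy_r]; first exact: ltW.
  apply: (balls_even_small dext_ultra); first exact: evenfsetP.
  have r_gt0 : 0 < r := lt_trans xy_gt0 xy_r.
  by move=> p q /supp[]-> /supp[]-> /=; rewrite ?d_refl ?(d_sym y x).
rewrite leNgt; apply/negP => /(parity_norm_lt dext_ultra).
apply: (not_balls_even_isolated (c := Some x) (p := Some x)) => /=.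
- by rewrite in_embedD eqxx (inj_eq (@Some_inj _)) (negPf xy).
- by rewrite d_refl.
- by move=> z /supp[]-> //=; rewrite ltxx.
Qed.

Section ClosureOfImage.
Variables (g : evenfset (option X)) (x : X) (m : R).
Hypotheses (m_gt0 : 0 < m) (m_le1 : m <= 1).
Hypothesis g_sep :
  forall p q, p \in efset g -> q \in efset g -> p != q -> m <= dext p q.
Hypothesis x_near_g : balls_even dext (efset (embed x + g)) m.

Let m_le_dist_inf q : m <= dist_inf q := le_trans m_le1 (dist_inf_ge1 q).

Lemma near_embed_has_inf : None \in efset g.
Proof.
apply/negPn/negP => Ng.
apply: (not_balls_even_isolated (c := None) (p := None) _ _ _ x_near_g) => //.
- by rewrite in_evenfsetD in_embed eqxx orbT (negPf Ng).
- by case=> [q|] // _ /=; rewrite ltNge m_le_dist_inf.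
Qed.

Lemma near_embed_close p : Some p \in efset g -> d x p < m.
Proof.
move=> gp; rewrite ltNge; apply/negP => far_xp.
have p_x : p != x by apply: contraTneq far_xp => ->; rewrite d_refl -ltNge.
apply: (not_balls_even_isolated (c := Some p) (p := Some p) _ _ _ x_near_g).
- by rewrite in_evenfsetD in_embed gp (inj_eq (@Some_inj _)) (negPf p_x).
- by rewrite /= d_refl.
case=> [q|]; last by rewrite /= ltNge m_le_dist_inf.
have [->//|qp] := eqVneq q p.
rewrite in_evenfsetD in_embed /=; case gq: (Some q \in efset g).
  move=> _ pq; have := g_sep gp gq; rewrite (inj_eq (@Some_inj _)) eq_sym qp.
  by move=> /(_ isT); rewrite /= leNgt pq.
by rewrite addbF orbF (inj_eq (@Some_inj _)) => /eqP->; rewrite d_sym ltNge far_xp.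
Qed.

Lemma near_embed_in_image : exists p, embed p = g.
Proof.
have [[p gp]|no_finite] := pselect (exists p, Some p \in efset g); last first.
  suff g1 : efset g = [fset None] by have := evenfsetP g; rewrite g1 cardfs1.
  apply/fsetP => -[q|]; rewrite inE /= ?near_embed_has_inf //.
  by apply/negP => gq; apply: no_finite; exists q.
exists p; apply: evenfset_ext => -[q|]; rewrite in_embed /= ?near_embed_has_inf ?orbT //.
have [->|qp] := eqVneq q p; first by rewrite eqxx gp.
rewrite orbF (inj_eq (@Some_inj _)) (negPf qp); apply/esym/negP => gq.
have near_pq : d p q < m.
  by apply: (ultra_lt_trans d_ultra (q := x)); rewrite ?(d_sym p) near_embed_close.
have := g_sep gp gq; rewrite (inj_eq (@Some_inj _)) eq_sym qp => /(_ isT) /=.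
by rewrite leNgt near_pq.
Qed.
End ClosureOfImage.

Lemma embed_closed : norm_closed (parity_norm dext) (fun g => exists x, embed x = g).
Proof.
move=> g g_lim; have [m m_gt0 g_sep] := fset_separation dext_ultra (efset g).
have m1_gt0 : 0 < Num.min 1 m by rewrite lt_min ltr01.
have [_ [x <-] near_xg] := g_lim _ m1_gt0.
apply: (@near_embed_in_image g x (Num.min 1 m)) => //; first by rewrite ge_min lexx.
  by move=> p q gp gq pq; rewrite ge_min (g_sep _ _ gp gq pq) orbT.
by have := parity_norm_lt dext_ultra near_xg; rewrite evenfsetN.
Qed.
End PointAtInfinity.

Theorem corollary8p4 (R : realType) (X : Type) (d : X -> X -> R) :
  is_ultrametric d ->
  exists (G : zmodType) (N : G -> R) (f : X -> G),
    [/\ is_boolean_group G,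
        is_ultranorm N,
        (forall x y, N (f x - f y) = d x y) &
        norm_closed N (fun g => exists x, f x = g)].
Proof.
move=> d_ultra; have [[a]|X0] := pselect (inhabited X).
  exists (evenfset (option {classic X})), (parity_norm (dext (X := {classic X}) d a)).
  exists (@embed {classic X}); split.
  - exact: evenfset_boolean.
  - exact/parity_norm_is_ultranorm/dext_ultra.
  - exact: (embed_isometry (X := {classic X}) a d_ultra).
  - exact: (embed_closed (X := {classic X}) (a := a) d_ultra).
have noX (x : X) : False by apply: X0.
exists (evenfset {classic X}), (fun _ => 0), (fun x => match noX x with end); split.
- exact: evenfset_boolean.
- split=> // [u v|u _]; first by rewrite maxxx.
  by apply: evenfset_ext => x; case: (noX x).
- by move=> x; case: (noX x).
- by move=> g /(_ 1 ltr01) [_ [x _] _]; case: (noX x).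
Qed.
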